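(* For any step size $\eta\ge0$ and any iteration $i$, \[ \eta(1-\eta\rho^2/8)\|\nabla\widehat{\mathcal R}(W_i)\|^2\le\widehat{\mathcal R}^{(i)}(W_i)-\widehat{\mathcal R}^{(i)}(W_{i+1}). \] If $\eta\le8/\rho^2$ then $\widehat{\mathcal R}^{(i)}(W_{i+1})\le\widehat{\mathcal R}^{(i)}(W_i)$, and if $\eta\le4/\rho^2$ then $\frac\eta2\|\nabla\widehat{\mathcal R}(W_i)\|^2\le\widehat{\mathcal R}^{(i)}(W_i)-\widehat{\mathcal R}^{(i)}(W_{i+1})$.
   Context: Sample $((x_k,y_k))_{k=1}^n$ with $\|x_k\|\le1$, $y_k\in\{\pm1\}$. $\ell(r)=\ln(1+e^{-r})$. Network of width $m$, temperature $\rho>0$, signs $a_j\in\{\pm1\}$: for $W$ with rows $w_j^\top$, $f(x;W)=\frac{\rho}{\sqrt m}\sum_ja_j\max\{0,w_j^\top x\}$, $\nabla f(x;W)=\frac{\rho}{\sqrt m}\sum_ja_j\mathbf 1[w_j^\top x\ge0]e_jx^\top$. $\widehat{\mathcal R}(W)=\frac1n\sum_k\ell(y_kf(x_k;W))$ and $\nabla\widehat{\mathcal R}(W)=\frac1n\sum_k\ell'(y_kf(x_k;W))y_k\nabla f(x_k;W)$. Gradient descent from $W_0$: $W_{i+1}=W_i-\eta\nabla\widehat{\mathcal R}(W_i)$. Features at time $i$: $\widehat{\mathcal R}^{(i)}(V)=\frac1n\sum_k\ell(y_k\langle\nabla f(x_k;W_i),V\rangle)$, $\langle A,B\rangle=\mathrm{tr}(A^\top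 B)$. $\|\cdot\|$ Frobenius norm. *)

From HB Require Import structures.
From mathcomp Require Import all_boot all_order all_algebra.
From mathcomp Require Import all_classical all_reals all_analysis.
Set Implicit Arguments. Unset Strict Implicit. Unset Printing Implicit Defensive.
Import Order.TTheory GRing.Theory Num.Theory.
Local Open Scope ring_scope.

Definition ell (R : realType) (r : R) : R := ln (1 + expR (- r)).

Definition ell' (R : realType) (r : R) : R := derive1 (@ell R) r.

Definition fnet (R : realType) (m d : nat) (rho : R) (a : 'I_m -> R)
  (W : 'M[R]_(m, d)) (x : 'cV[R]_d) : R :=
  rho / Num.sqrt (m%:R) * \sum_(j < m) a j * Num.max 0 ((row j W *m x) 0 0).

Definition gradf (R : realType) (m d : nat) (rho : R) (a : 'I_m -> R)
  (W : 'M[R]_(m, d)) (x : 'cV[R]_d) : 'M[R]_(m, d) :=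
  (rho / Num.sqrt (m%:R)) *:
    \sum_(j < m) (a j * (if 0 <= (row j W *m x) 0 0 then 1 else 0))
                   *: (delta_mx j (0 : 'I_1) *m x^T).

Definition frob_inner (R : realType) (m d : nat) (A B : 'M[R]_(m, d)) : R :=
  \tr (A^T *m B).
Definition frob_norm (R : realType) (m d : nat) (A : 'M[R]_(m, d)) : R :=
  Num.sqrt (\sum_(i < m) \sum_(j < d) A i j ^+ 2).

Definition riskhat (R : realType) (m d n : nat) (rho : R) (a : 'I_m -> R)
  (X : 'I_n -> 'cV[R]_d) (Y : 'I_n -> R) (W : 'M[R]_(m, d)) : R :=
  n%:R^-1 * \sum_(k < n) ell (Y k * fnet rho a W (X k)).

Definition grad_riskhat (R : realType) (m d n : nat) (rho : R) (a : 'I_m -> R)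
  (X : 'I_n -> 'cV[R]_d) (Y : 'I_n -> R) (W : 'M[R]_(m, d)) : 'M[R]_(m, d) :=
  n%:R^-1 *: \sum_(k < n) (ell' (Y k * fnet rho a W (X k)) * Y k)
                            *: gradf rho a W (X k).

Definition gd (R : realType) (m d n : nat) (rho : R) (a : 'I_m -> R)
  (X : 'I_n -> 'cV[R]_d) (Y : 'I_n -> R) (eta : R) (W0 : 'M[R]_(m, d))
  (i : nat) : 'M[R]_(m, d) :=
  iter i (fun W => W - eta *: grad_riskhat rho a X Y W) W0.

Definition feat_risk (R : realType) (m d n : nat) (rho : R) (a : 'I_m -> R)
  (X : 'I_n -> 'cV[R]_d) (Y : 'I_n -> R) (Wi V : 'M[R]_(m, d)) : R :=
  n%:R^-1 * \sum_(k < n) ell (Y k * frob_inner (gradf rho a Wi (X k)) V).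

From HB Require Import structures.
From mathcomp Require Import all_boot all_order all_algebra.
From mathcomp Require Import all_classical all_reals all_analysis.
From mathcomp Require Import ring lra.
Import Order.TTheory GRing.Theory Num.Theory.
Local Open Scope ring_scope.

(* The feature risk R^(i) is the logistic risk of a linear model whose features
   are the gradients grad f(x_k; W_i).  Since l'' = s (1 - s) <= 1/4 for the
   sigmoid s, the loss lies below its tangent plus t^2/8; as the features have
   Frobenius norm at most rho, R^(i) is (rho^2/4)-smooth.  Positive homogeneity
   of the ReLU gives <grad f(x; W), W> = f(x; W), so the gradient of R^(i) at
   W_i is the gradient of the empirical risk at W_i: a gradient-descent step on
   the risk is a gradient step on R^(i), and the descent lemma for smooth
   functions gives the bound. *)

Lemma cauchy_schwarz_sum (R : realDomainType) (I : finType) (u v : I -> R) :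
  (\sum_i u i * v i) ^+ 2 <= (\sum_i u i ^+ 2) * (\sum_i v i ^+ 2).
Proof.
set A := \sum_i u i ^+ 2; set B := \sum_i v i ^+ 2; set C := \sum_i u i * v i.
have lagrange : \sum_i \sum_j (u i * v j - u j * v i) ^+ 2 = 2 * (A * B - C ^+ 2).
  have eAB : A * B = \sum_i \sum_j u i ^+ 2 * v j ^+ 2 by rewrite big_distrlr.
  have eBA : A * B = \sum_i \sum_j u j ^+ 2 * v i ^+ 2.
    by rewrite mulrC big_distrlr; apply: eq_bigr => i _; apply: eq_bigr => j _; rewrite mulrC.
  have eCC : C ^+ 2 = \sum_i \sum_j u i * v i * (u j * v j) by rewrite expr2 big_distrlr.
  rewrite mulrBr mulr2n mulrDl mul1r {1}eAB eBA eCC mulr_sumr -big_split /= -sumrB.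
  apply: eq_bigr => i _; rewrite mulr_sumr -big_split /= -sumrB.
  by apply: eq_bigr => j _; ring.
have : 0 <= \sum_i \sum_j (u i * v j - u j * v i) ^+ 2.
  by apply: sumr_ge0 => i _; apply: sumr_ge0 => j _; apply: sqr_ge0.
by rewrite lagrange pmulr_rge0 // subr_ge0.
Qed.

Section Monotone.
Context {R : realType}.
Implicit Types (f df : R -> R) (a b x y z : R).

Lemma derive_le0_nincr {f df a b} : (forall x, is_derive x 1 f (df x)) ->
  a <= b -> (forall x, a <= x <= b -> df x <= 0) -> f b <= f a.
Proof.
move=> fdf ab df_le0.
have derf x : derivable f x 1 by case: (fdf x).
apply: (ler0_derive1_le_cc (a := a) (b := b)) => //.
- move=> x /[!in_itv] /andP[ax xb].
  by rewrite derive1E derive_val df_le0 ?ltW ?ax.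
- exact: derivable_within_continuous.
- by rewrite in_itv /= lexx ab.
- by rewrite in_itv /= lexx ab.
Qed.

Lemma tangent_ub_of_nincr_derive f df x y :
  (forall z, is_derive z 1 f (df z)) -> {homo df : u v /~ u <= v} ->
  f y <= f x + df x * (y - x).
Proof.
move=> fdf df_nincr.
pose h z := f z - df x * z.
have hdh z : is_derive z 1 h (df z - df x).
  by apply: is_derive_eq; rewrite /GRing.scale /= mulr1.
suff : h y <= h x by rewrite /h mulrBr; lra.
have [xy | yx] := leP x y.
  apply: (derive_le0_nincr hdh xy) => z /andP[xz _].
  by rewrite subr_le0 df_nincr.
rewrite -lerN2.
apply: (derive_le0_nincr (f := fun z => - h z) (df := fun z => df x - df z) _ (ltW yx)).
  by move=> z; apply: is_derive_eq; rewrite opprB.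
by move=> z /andP[_ zx]; rewrite subr_le0 df_nincr.
Qed.
End Monotone.

Section Logistic.
Context {R : realType}.
Implicit Types r t z : R.

Lemma onePexpR_gt0 r : 0 < 1 + expR r :> R.
Proof. by rewrite ltr_wpDr ?expR_ge0. Qed.

Global Instance is_derive_ell r : is_derive r 1 (@ell R) (- (1 + expR r)^-1).
Proof.
have dE : is_derive r 1 (fun r => 1 + expR (- r)) (- expR (- r)).
  by apply: is_derive_eq; rewrite add0r mul1r mulrN1.
have dlnE := @is_derive1_comp R (@ln R) _ r _ _ (is_derive1_ln (onePexpR_gt0 (- r))) dE.
apply: is_derive_eq dlnE _.
have er0 : expR r != 0 by rewrite gt_eqF ?expR_gt0.
rewrite expRN mulrN; congr (- _); field.
by rewrite er0 !gt_eqF // -?expRN onePexpR_gt0.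
Qed.

Lemma ell'E : @ell' R = fun r => - (1 + expR r)^-1.
Proof. by apply/funext => r; rewrite /ell' derive1E derive_val. Qed.

Global Instance is_derive_ell' r : is_derive r 1 (@ell' R) (expR r / (1 + expR r) ^+ 2).
Proof.
have dE : is_derive r 1 (fun r => 1 + expR r) (expR r).
  by apply: is_derive_eq; rewrite add0r mul1r.
have dV := @is_deriveV R (fun r => 1 + expR r) _ _ _ (lt0r_neq0 (onePexpR_gt0 r)) dE.
by rewrite ell'E; apply: is_derive_eq (is_deriveN dV) _; rewrite scaleNr opprK [LHS]mulrC.
Qed.

Lemma expR_div_sqr_le r : expR r / (1 + expR r) ^+ 2 <= 4^-1.
Proof.
have sq_gt0 : 0 < (1 + expR r) ^+ 2 by rewrite exprn_gt0 ?onePexpR_gt0.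
rewrite ler_pdivrMr // -subr_ge0.
have -> : 4^-1 * (1 + expR r) ^+ 2 - expR r = 4^-1 * (1 - expR r) ^+ 2 by field.
by rewrite mulr_ge0 ?sqr_ge0.
Qed.

Lemma ell'_sub_nincr : {homo (fun r => ell' r - r / 4) : r t /~ r <= t}.
Proof.
move=> y x xy.
apply: (derive_le0_nincr (f := fun u => ell' u - u / 4)
  (df := fun u : R => expR u / (1 + expR u) ^+ 2 - 4^-1) _ xy) => [u|u _].
  by apply: is_derive_eq; rewrite !scaler0 add0r /GRing.scale /= mulr1.
by rewrite subr_le0 expR_div_sqr_le.
Qed.

Lemma ell_quadratic_ub r t : ell (r + t) <= ell r + ell' r * t + t ^+ 2 / 8.
Proof.
(* [ell u - u ^+ 2 / 8] is concave: its derivative is nonincreasing. *)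
have dg z : is_derive z 1 (fun u => ell u - u ^+ 2 / 8) (ell' z - z / 4).
  by apply: is_derive_eq; rewrite ell'E !scaler0 add0r /GRing.scale /= !mulr1; field.
have := tangent_ub_of_nincr_derive _ _ r (r + t) dg ell'_sub_nincr.
have -> : ell r + ell' r * t + t ^+ 2 / 8 =
  ell r - r ^+ 2 / 8 + (ell' r - r / 4) * (r + t - r) + (r + t) ^+ 2 / 8 by field.
lra.
Qed.
End Logistic.

Section Frobenius.
Context {R : realType} {m d : nat}.
Implicit Types A B C : 'M[R]_(m, d).

Lemma frob_innerE A B : frob_inner A B = \sum_i \sum_j A i j * B i j.
Proof.
rewrite /frob_inner /mxtrace exchange_big; apply: eq_bigr => j _.
by rewrite !mxE; apply: eq_bigr => i _; rewrite mxE.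
Qed.

Lemma frob_inner_suml (I : Type) (r : seq I) (P : pred I) (F : I -> 'M[R]_(m, d)) B :
  frob_inner (\sum_(k <- r | P k) F k) B = \sum_(k <- r | P k) frob_inner (F k) B.
Proof. by rewrite /frob_inner !linear_sum /= mulmx_suml linear_sum. Qed.

Lemma frob_innerZl s A B : frob_inner (s *: A) B = s * frob_inner A B.
Proof. by rewrite /frob_inner linearZ /= -scalemxAl linearZ. Qed.

Lemma frob_innerZr s A B : frob_inner A (s *: B) = s * frob_inner A B.
Proof. by rewrite /frob_inner -scalemxAr linearZ. Qed.

Lemma frob_norm_sqr A : frob_norm A ^+ 2 = \sum_i \sum_j A i j ^+ 2.
Proof.
rewrite /frob_norm sqr_sqrtr // sumr_ge0 // => i _.
by rewrite sumr_ge0 // => j _; rewrite sqr_ge0.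
Qed.

Lemma frob_inner_self A : frob_inner A A = frob_norm A ^+ 2.
Proof.
rewrite frob_innerE frob_norm_sqr.
by apply: eq_bigr => i _; apply: eq_bigr => j _; rewrite expr2.
Qed.

Lemma frob_innerDr A B C : frob_inner A (B + C) = frob_inner A B + frob_inner A C.
Proof. by rewrite /frob_inner mulmxDr linearD. Qed.

Lemma frob_inner_sqr_le A B : frob_inner A B ^+ 2 <= frob_norm A ^+ 2 * frob_norm B ^+ 2.
Proof. by rewrite frob_innerE !frob_norm_sqr !pair_big /=; apply: cauchy_schwarz_sum. Qed.

Lemma frob_norm_sqrZ s A : frob_norm (s *: A) ^+ 2 = s ^+ 2 * frob_norm A ^+ 2.
Proof. by rewrite -!frob_inner_self frob_innerZl frob_innerZr mulrA. Qed.

End Frobenius.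

Section Network.
Context {R : realType} {m d : nat} (rho : R) (a : 'I_m -> R).
Implicit Types (W : 'M[R]_(m, d)) (x : 'cV[R]_d).

Lemma gradfE W x i l : gradf rho a W x i l =
  rho / Num.sqrt m%:R * (a i * (if 0 <= (row i W *m x) 0 0 then 1 else 0)) * x l 0.
Proof.
rewrite /gradf mxE summxE (bigD1 i) //= big1 ?addr0 => [|j ji].
  by rewrite !mxE big_ord1 !mxE !eqxx mul1r mulrA.
by rewrite !mxE big_ord1 !mxE eq_sym (negbTE ji) mul0r mulr0.
Qed.

Lemma frob_inner_gradf W x : frob_inner (gradf rho a W x) W = fnet rho a W x.
Proof.
rewrite frob_innerE /fnet mulr_sumr; apply: eq_bigr => i _.
under eq_bigr => l _ do rewrite gradfE -mulrA.
rewrite -mulr_sumr -!mulrA; congr (_ * (_ * (_ * _))).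
have -> : (row i W *m x) 0 0 = \sum_l x l 0 * W i l.
  by rewrite !mxE; apply: eq_bigr => l _; rewrite mxE mulrC.
by case: lerP => h; rewrite ?mul1r ?mul0r ?max_r ?max_l // ltW.
Qed.

Lemma frob_norm_gradf_le W x : (forall j, `|a j| <= 1) -> \sum_l x l 0 ^+ 2 <= 1 ->
  frob_norm (gradf rho a W x) ^+ 2 <= rho ^+ 2.
Proof.
move=> a_le1 x_le1; set c := rho / Num.sqrt m%:R.
have row_le i : \sum_l gradf rho a W x i l ^+ 2 <= c ^+ 2.
  under eq_bigr => l _ do rewrite gradfE exprMn.
  rewrite -mulr_sumr (le_trans (ler_wpM2l (sqr_ge0 _) x_le1)) // mulr1 exprMn.
  rewrite ler_piMr ?sqr_ge0 // -real_normK ?num_real // exprn_ile1 // normrM.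
  by rewrite mulr_ile1 // ?a_le1; case: ifP; rewrite ?normr1 ?normr0.
rewrite frob_norm_sqr (le_trans (ler_sum _ (fun i _ => row_le i))) //.
rewrite sumr_const card_ord -mulr_natr /c exprMn exprVn sqr_sqrtr // -mulrA.
(* For [m = 0] the scale [rho / sqrt 0] is the junk value [0]. *)
rewrite ler_piMr ?sqr_ge0 //; case: m => [|k]; first by rewrite invr0 mul0r.
by rewrite mulVf // pnatr_eq0.
Qed.
End Network.

(* [lin_risk G y] with [G k = gradf rho a W_i (X k)] is the feature risk R^(i). *)
Section LinearizedRisk.
Context {R : realType} {m d n : nat} (G : 'I_n -> 'M[R]_(m, d)) (y : 'I_n -> R).
Implicit Types V D : 'M[R]_(m, d).

Definition lin_risk V := n%:R^-1 * \sum_k ell (y k * frob_inner (G k) V).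

Definition lin_risk_grad V :=
  n%:R^-1 *: \sum_k (ell' (y k * frob_inner (G k) V) * y k) *: G k.

Lemma frob_inner_lin_risk_grad V D : frob_inner (lin_risk_grad V) D =
  n%:R^-1 * \sum_k ell' (y k * frob_inner (G k) V) * (y k * frob_inner (G k) D).
Proof.
rewrite frob_innerZl frob_inner_suml; congr (_ * _); apply: eq_bigr => k _.
by rewrite frob_innerZl mulrA.
Qed.

Variable c : R.
Hypotheses (n_gt0 : (0 < n)%N) (y_le1 : forall k, `|y k| <= 1)
  (G_le : forall k, frob_norm (G k) ^+ 2 <= c).

Lemma lin_risk_smooth V D :
  lin_risk (V + D) <=
  lin_risk V + frob_inner (lin_risk_grad V) D + c / 8 * frob_norm D ^+ 2.
Proof.
have step_le k : (y k * frob_inner (G k) D) ^+ 2 <= c * frob_norm D ^+ 2.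
  have y2 : y k ^+ 2 <= 1 by rewrite -real_normK ?num_real // exprn_ile1.
  rewrite exprMn (le_trans (ler_piMl (sqr_ge0 _) y2)) //.
  apply: (le_trans (frob_inner_sqr_le _ _)).
  by rewrite ler_wpM2r ?sqr_ge0.
have term_le k : ell (y k * frob_inner (G k) (V + D)) <=
    ell (y k * frob_inner (G k) V)
    + ell' (y k * frob_inner (G k) V) * (y k * frob_inner (G k) D)
    + c / 8 * frob_norm D ^+ 2.
  rewrite frob_innerDr mulrDr (le_trans (ell_quadratic_ub _ _)) //.
  by rewrite lerD2l [leRHS]mulrAC ler_pM2r ?step_le.
have n_neq0 : n%:R != 0 :> R by rewrite pnatr_eq0 -lt0n.
rewrite /lin_risk frob_inner_lin_risk_grad -mulrDr -[c / 8 * _](mulKf n_neq0) -mulrDr.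
rewrite ler_wpM2l ?invr_ge0 // mulr_natl -[n in _ *+ n]card_ord -sumr_const -!big_split.
by apply: ler_sum => k _; apply: term_le.
Qed.

Lemma lin_risk_descent V eta :
  eta * (1 - eta * c / 8) * frob_norm (lin_risk_grad V) ^+ 2 <=
  lin_risk V - lin_risk (V - eta *: lin_risk_grad V).
Proof.
set g := lin_risk_grad V.
have := lin_risk_smooth V (- (eta *: g)).
rewrite -scaleNr frob_innerZr frob_inner_self (frob_norm_sqrZ (- eta)).
have -> : eta * (1 - eta * c / 8) * frob_norm g ^+ 2 =
  - (- eta * frob_norm g ^+ 2 + c / 8 * ((- eta) ^+ 2 * frob_norm g ^+ 2)) by field.
lra.
Qed.
End LinearizedRisk.

Lemma grad_riskhatE {R : realType} {m d n : nat} rho (a : 'I_m -> R)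
    (X : 'I_n -> 'cV[R]_d) (Y : 'I_n -> R) (W : 'M[R]_(m, d)) :
  grad_riskhat rho a X Y W = lin_risk_grad (fun k => gradf rho a W (X k)) Y W.
Proof. by rewrite /lin_risk_grad; under [in RHS]eq_bigr => k _ do rewrite frob_inner_gradf. Qed.

Theorem lemmaA9 (R : realType) (m d n : nat) (rho : R) (a : 'I_m -> R)
  (X : 'I_n -> 'cV[R]_d) (Y : 'I_n -> R) (W0 : 'M[R]_(m, d)) (eta : R) (i : nat) :
  (0 < m)%N -> (0 < n)%N -> 0 < rho ->
  (forall j, a j = 1 \/ a j = -1) ->
  (forall k, \sum_(l < d) (X k l 0) ^+ 2 <= 1) ->
  (forall k, Y k = 1 \/ Y k = -1) ->
  0 <= eta ->
  let Wi := gd rho a X Y eta W0 i in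
  let Wi1 := gd rho a X Y eta W0 i.+1 in
  let g := grad_riskhat rho a X Y Wi in
  let Ri := feat_risk rho a X Y Wi in
  [/\ eta * (1 - eta * rho ^+ 2 / 8) * frob_norm g ^+ 2 <= Ri Wi - Ri Wi1,
      (eta <= 8 / rho ^+ 2 -> Ri Wi1 <= Ri Wi)
    & (eta <= 4 / rho ^+ 2 -> eta / 2 * frob_norm g ^+ 2 <= Ri Wi - Ri Wi1)].
Proof.
move=> _ n_gt0 rho_gt0 a_sign x_le1 Y_sign eta_ge0 Wi Wi1 g Ri.
have a_le1 j : `|a j| <= 1 by case: (a_sign j) => ->; rewrite ?normrN normr1.
have Y_le1 k : `|Y k| <= 1 by case: (Y_sign k) => ->; rewrite ?normrN normr1.
have descent : eta * (1 - eta * rho ^+ 2 / 8) * frob_norm g ^+ 2 <= Ri Wi - Ri Wi1.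
  have -> : Wi1 = Wi - eta *: g by [].
  rewrite /g grad_riskhatE.
  by apply: lin_risk_descent => // k; apply: frob_norm_gradf_le.
have rho2_gt0 : 0 < rho ^+ 2 by rewrite exprn_gt0.
have N_ge0 := sqr_ge0 (frob_norm g).
split=> //; rewrite ler_pdivlMr // => eta_le.
  suff : 0 <= eta * (1 - eta * rho ^+ 2 / 8) * frob_norm g ^+ 2 by lra.
  by apply/mulr_ge0/N_ge0/mulr_ge0 => //; lra.
suff : eta / 2 * frob_norm g ^+ 2 <= eta * (1 - eta * rho ^+ 2 / 8) * frob_norm g ^+ 2 by lra.
by apply/ler_wpM2r/ler_wpM2l => //; lra.
Qed.
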